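(* Let $G$ be a 2-connected simple graph with maximum degree $\Delta(G)$. Then $\phi(G)\ge \lfloor \Delta(G)/2\rfloor$.
   Context: For a graph $G$, $\phi(G)$ is the maximum number of pairwise edge-disjoint cycles in $G$. *)

From mathcomp Require Import all_boot.
Set Implicit Arguments. Unset Strict Implicit. Unset Printing Implicit Defensive.

Definition simple_graph (T : finType) (e : rel T) : Prop :=
  symmetric e /\ irreflexive e.

Definition deg (T : finType) (e : rel T) (x : T) : nat := #|[set y | e x y]|.
Definition max_deg (T : finType) (e : rel T) : nat := \max_(x : T) deg e x.

Definition del_vertex (T : finType) (e : rel T) (v : T) : rel T :=
  [rel a b | [&& e a b, a != v & b != v]].

Definition connected_graph (T : finType) (e : rel T) : Prop :=
  forall x y : T, connect e x y.

Definition two_connected (T : finType) (e : rel T) : Prop :=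
  [/\ 3 <= #|T|, connected_graph e &
      forall v x y : T, x != v -> y != v -> connect (del_vertex e v) x y].

Definition is_cycle (T : finType) (e : rel T) (c : seq T) : bool :=
  (3 <= size c) && ucycleb e c.

Definition cycle_edges (T : finType) (c : seq T) : {set {set T}} :=
  [set [set x; next c x] | x in c].

Definition edge_disjoint_cycles (T : finType) (e : rel T) (cs : seq (seq T)) : Prop :=
  all (is_cycle e) cs /\
  pairwise (fun c1 c2 => [disjoint cycle_edges c1 & cycle_edges c2]) cs.

(* phi(G) >= k : there exist k pairwise edge-disjoint cycles. *)
Definition phi_ge (T : finType) (e : rel T) (k : nat) : Prop :=
  exists cs : seq (seq T), edge_disjoint_cycles e cs /\ size cs = k.

From mathcomp Require Import all_boot.
Set Implicit Arguments. Unset Strict Implicit. Unset Printing Implicit Defensive.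

(* Let v be a vertex of maximum degree and N its neighbourhood.  As G - v is
   connected, it contains |N|/2 edge-disjoint paths whose endpoints are pairwise
   distinct vertices of N; closing each of them through v gives the cycles.
   Such paths pairing up any S inside a vertex set A are found by induction
   along a connected growth of A: when a vertex w adjacent to a \in A is added,
   either w is not in S, or the edge wa is a new path (if a is in S), or we
   pair up S - w + a and then prolong by wa the path ending at a, if any. *)

Lemma uniq_flatten_disjoint (T : finType) (ss : seq (seq T)) :
  uniq (flatten ss) -> pairwise (fun s t => [disjoint s & t]) ss.
Proof.
elim: ss => //= s ss IHss; rewrite cat_uniq => /and3P[_ s_ss /IHss->]; rewrite andbT.
apply/allP => t tss; rewrite disjoint_sym disjoint_has; apply: contra s_ss.
by case/hasP=> x xt xs; apply/hasP; exists x => //; apply/flattenP; exists t.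
Qed.

Section PathEdges.
Variable T : finType.

Definition path_edges (p : seq T) : seq {set T} :=
  if p is x :: q then pairmap (fun a b => [set a; b]) x q else [::].

Definition endpoints (p : seq T) : seq T :=
  if p is x :: q then [:: x; last x q] else [::].

Lemma endpoints_sub p : {subset endpoints p <= p}.
Proof.
case: p => [|x q] //= y; rewrite mem_seq2 => /orP[]/eqP->.
  exact: mem_head.
exact: mem_last.
Qed.

Lemma path_edges_sub p E z : E \in path_edges p -> z \in E -> z \in p.
Proof.
case: p => [|x q] //=; elim: q x => [|y q IHq] x //=.
rewrite inE => /orP[/eqP-> | /IHq Eq_z zE]; last by rewrite inE Eq_z ?orbT.
by rewrite !inE => /orP[]->; rewrite ?orbT.
Qed.

Lemma cycle_edges_sub x q : {subset cycle_edges (x :: q) <= path_edges (x :: rcons q x)}.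
Proof.
move=> E /imsetP[y yc ->]; rewrite next_nth yc -nth_rcons_default.
have lt_i : index y (x :: q) < size (rcons q x) by rewrite size_rcons index_mem.
set i := index y (x :: q) in lt_i *.
rewrite -{1}(nth_index x yc) -/i -nth_rcons_default -[rcons (x :: q) x]/(x :: rcons q x).
rewrite -(nth_pairmap x set0 (fun a b => [set a; b]) lt_i).
by rewrite mem_nth ?size_pairmap.
Qed.

Lemma cycle_edges_cons v p E : p != [::] -> E \in cycle_edges (v :: p) ->
  (exists2 a, a \in endpoints p & E = [set v; a]) \/ E \in path_edges p.
Proof.
case: p => [|x q] // _ /cycle_edges_sub /=.
rewrite -cats1 pairmap_cat in_cons mem_cat mem_seq1 /=.
case/or3P=> [/eqP-> | Eq | /eqP->]; [left | by right | left].
  by exists x; rewrite ?mem_head.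
by exists (last x q); [rewrite mem_seq2 eqxx orbT | rewrite setUC].
Qed.

Lemma disjoint_cycle_edges_cons v p q : p != [::] -> q != [::] ->
  v \notin p -> v \notin q -> [disjoint endpoints p & endpoints q] ->
  [disjoint path_edges p & path_edges q] ->
  [disjoint cycle_edges (v :: p) & cycle_edges (v :: q)].
Proof.
move=> p0 q0 vp vq dN dE; apply/pred0P => E; apply/negP => /andP[].
move=> /(cycle_edges_cons p0)[[a ap ->] | Ep] /(cycle_edges_cons q0)[[b bq Eb] | Eq].
- have /set2P[av | ab] : a \in [set v; b] by rewrite -Eb set22.
    by rewrite -av (endpoints_sub ap) in vp.
  by rewrite -ab (disjointFr dN ap) in bq.
- by rewrite (path_edges_sub Eq (set21 v a)) in vq.
- by rewrite (path_edges_sub Ep (_ : v \in E)) ?Eb ?set21 in vp.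
- by rewrite (disjointFr dE Ep) in Eq.
Qed.

End PathEdges.

Section Pairing.
Variables (T : finType) (e : rel T).
Hypothesis e_sym : symmetric e.
Implicit Types (A B S : {set T}) (p q : seq T) (F G : seq (seq T)).

Definition upath_in (A : {set T}) (p : seq T) : bool :=
  if p is x :: q then [&& q != [::], path e x q, uniq p & all (mem A) p] else false.

Lemma upath_in_sub A p : upath_in A p -> {subset p <= A}.
Proof. by case: p => [|x q] // /and4P[_ _ _ /allP]. Qed.

Lemma upath_in_widen A B p : A \subset B -> upath_in A p -> upath_in B p.
Proof.
case: p => [|x q] // AB /and4P[q0 xq uxq pA]; apply/and4P; split=> //.
by apply: sub_all pA => y /(subsetP AB).
Qed.

Definition edges_of (F : seq (seq T)) : seq {set T} := flatten [seq path_edges p | p <- F].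
Definition ends_of (F : seq (seq T)) : seq T := flatten [seq endpoints p | p <- F].

Definition pairing (A S : {set T}) (F : seq (seq T)) : Prop :=
  [/\ size F = #|S|./2, all (upath_in A) F, uniq (edges_of F),
      uniq (ends_of F) & {subset ends_of F <= S}].

Definition pairable (A : {set T}) : Prop :=
  forall S, S \subset A -> exists F, pairing A S F.

Lemma edges_of_sub A F E z :
  all (upath_in A) F -> E \in edges_of F -> z \in E -> z \in A.
Proof.
move=> /allP FA /flatten_mapP[p pF Ep] zE.
exact: upath_in_sub (FA p pF) _ (path_edges_sub Ep zE).
Qed.

Lemma ends_of_sub A F : all (upath_in A) F -> {subset ends_of F <= A}.
Proof.
move=> /allP FA z /flatten_mapP[p pF zp].
exact: upath_in_sub (FA p pF) _ (endpoints_sub zp).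
Qed.

Lemma pairing_widen A B S F : A \subset B -> pairing A S F -> pairing B S F.
Proof.
move=> AB [sizeF FA uE uN NS]; split=> //.
by apply: sub_all FA => p; apply: upath_in_widen.
Qed.

Lemma pairing_perm A S F G : perm_eq F G -> pairing A S F -> pairing A S G.
Proof.
move=> FG [sizeF FA uE uN NS].
have eE : perm_eq (edges_of F) (edges_of G) by apply/perm_flatten/perm_map.
have eN : perm_eq (ends_of F) (ends_of G) by apply/perm_flatten/perm_map.
split; first by rewrite -(perm_size FG).
- by rewrite -(perm_all _ FG).
- by rewrite -(perm_uniq eE).
- by rewrite -(perm_uniq eN).
- by move=> z; rewrite -(perm_mem eN) => /NS.
Qed.

Lemma pairable_small A : #|A| <= 1 -> pairable A.
Proof.
move=> A1 S SA; exists [::]; split=> //=.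
by have := leq_trans (subset_leq_card SA) A1; case: #|S| => [|[]].
Qed.

Lemma cardsU1D1 S a w : a \notin S -> w \in S -> #|a |: (S :\ w)| = #|S|.
Proof. by move=> aS wS; rewrite cardsU1 in_setD1 (negbTE aS) andbF (cardsD1 w S) wS. Qed.

Lemma pairing_skip A S F a w : a \notin ends_of F -> a \notin S -> w \in S ->
  pairing A (a |: (S :\ w)) F -> pairing A S F.
Proof.
move=> aF aS wS [sizeF FA uE uN NS]; split=> //.
  by rewrite sizeF cardsU1D1.
move=> z zF; have /setU1P[za | /setD1P[_ //]] := NS z zF.
by rewrite -za zF in aF.
Qed.

Section Extension.
Variables (A : {set T}) (a w : T).
Hypotheses (aA : a \in A) (wA : w \notin A) (e_aw : e a w).

Lemma upath_extend p : upath_in A p -> a \in endpoints p ->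
  exists2 p', upath_in (w |: A) p' &
    exists o, [/\ perm_eq (path_edges p') ([set w; a] :: path_edges p),
                  perm_eq (endpoints p) [:: a; o] & perm_eq (endpoints p') [:: w; o]].
Proof.
case: p => [|x q] // /[dup] xqA /and4P[q0 xq uxq _] /=.
have wxq : w \notin x :: q by apply: contra wA => /(upath_in_sub xqA).
have /and4P[_ _ _ all_wA] := upath_in_widen (subsetUr [set w] A) xqA.
rewrite mem_seq2 => /orP[/eqP ax | /eqP a_last].
  subst x; exists (w :: a :: q); last by exists (last a q); split; apply: perm_refl.
  apply/and4P; split=> //; first by rewrite /= e_sym e_aw.
    by rewrite cons_uniq wxq.
  by apply/andP; split; [exact: setU11 | exact: all_wA].
exists (rcons (x :: q) w).
  apply/and4P; split; first by rewrite -size_eq0 size_rcons.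
  - by rewrite rcons_path xq -a_last e_aw.
  - by rewrite rcons_uniq wxq.
  - by rewrite all_rcons; apply/andP; split; [exact: setU11 | exact: all_wA].
exists x; rewrite /= last_rcons -a_last; split.
- by rewrite -cats1 pairmap_cat cats1 -a_last setUC perm_rcons.
- by rewrite (perm_catC [:: x] [:: a]).
- by rewrite (perm_catC [:: x] [:: w]).
Qed.

Lemma new_edge_fresh F : all (upath_in A) F -> [set w; a] \notin edges_of F.
Proof. by move=> FA; apply: contra wA => /(edges_of_sub FA); apply; rewrite set21. Qed.

Lemma pairing_add_edge S F : a \in S -> w \in S ->
  pairing A (S :\ w :\ a) F -> pairing (w |: A) S ([:: w; a] :: F).
Proof.
move=> aS wS [sizeF FA uE uN NS].
have aw : a != w by apply: contraNneq wA => <-.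
have NS' z : z \in ends_of F -> [&& z != a, z != w & z \in S] by move/NS; rewrite !inE.
split.
- by rewrite /= sizeF (cardsD1 w S) wS (cardsD1 a (S :\ w)) !inE aw aS.
- apply/andP; split; last by apply: sub_all FA => p; apply/upath_in_widen/subsetUr.
  apply/and4P; split=> //; first by rewrite /= e_sym e_aw.
    by rewrite /= inE eq_sym aw.
  by rewrite /= setU11 inE aA orbT.
- by rewrite cons_uniq new_edge_fresh.
- rewrite /= !inE negb_or eq_sym aw uN andbT.
  by apply/andP; split; apply/negP => /NS' /and3P[]; rewrite eqxx.
- move=> z; rewrite mem_cat mem_seq2 => /orP[/orP[]/eqP-> // | /NS'/and3P[] //].
Qed.

Lemma pairing_extend S q G : a \in endpoints q -> a \notin S -> w \in S ->
  pairing A (a |: (S :\ w)) (q :: G) -> exists F, pairing (w |: A) S F.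
Proof.
move=> aq aS wS [sizeF FA uE uN NS].
have /andP[qA GA] : upath_in A q && all (upath_in A) G := FA.
have [q' q'A [o [Eq' Nq Nq']]] := upath_extend qA aq.
have NqG : perm_eq (ends_of (q :: G)) (a :: o :: ends_of G) by apply: perm_cat Nq _.
have Nq'G : perm_eq (ends_of (q' :: G)) (w :: o :: ends_of G) by apply: perm_cat Nq' _.
have : uniq (a :: o :: ends_of G) by rewrite -(perm_uniq NqG).
rewrite !cons_uniq => /and3P[a_oG o_G uG].
have oG_qG z : z \in o :: ends_of G -> z \in ends_of (q :: G).
  by move=> zoG; rewrite (perm_mem NqG) inE zoG orbT.
have oG_w z : z \in o :: ends_of G -> z != w.
  by move/oG_qG/(ends_of_sub FA); apply: contraTneq => ->.
exists (q' :: G); split.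
- by rewrite -(cardsU1D1 aS wS) -sizeF.
- by rewrite /= q'A; apply: sub_all GA => p; apply/upath_in_widen/subsetUr.
- rewrite /edges_of /= (perm_uniq (perm_cat Eq' (perm_refl _))).
  by apply/andP; split; [exact: new_edge_fresh FA | exact: uE].
- rewrite (perm_uniq Nq'G) !cons_uniq o_G uG !andbT.
  by apply/negP => /oG_w; rewrite eqxx.
- move=> z; rewrite (perm_mem Nq'G) in_cons => /predU1P[-> // | zoG].
  have /setU1P[za | /setD1P[] //] := NS z (oG_qG z zoG).
  by rewrite -za zoG in a_oG.
Qed.
End Extension.

Lemma pairableU1 A a w : pairable A -> a \in A -> w \notin A -> e a w ->
  pairable (w |: A).
Proof.
move=> pairA aA wA e_aw S SwA.
have SwA' : S :\ w \subset A by rewrite subDset.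
have [wS | wS] := boolP (w \in S); last first.
  have [F pF] : exists F, pairing A S F.
    by apply: pairA; apply: subset_trans SwA'; rewrite subsetD1 subxx.
  by exists F; apply: pairing_widen (subsetUr _ _) pF.
have [aS | aS] := boolP (a \in S).
  have [F pF] := pairA _ (subset_trans (subD1set _ a) SwA').
  by exists ([:: w; a] :: F); apply: pairing_add_edge.
have [F pF] : exists F, pairing A (a |: (S :\ w)) F.
  by apply: pairA; rewrite subUset sub1set aA.
have [/flatten_mapP[q qF aq] | aF] := boolP (a \in ends_of F).
  exact: pairing_extend aq aS wS (pairing_perm (perm_to_rem qF) pF).
by exists F; apply: pairing_widen (subsetUr _ _) (pairing_skip aF aS wS pF).
Qed.

Lemma connect_cross (r : rel T) A x y : connect r x y -> x \in A -> y \notin A ->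
  exists a b, [/\ r a b, a \in A & b \notin A].
Proof.
move/connectP=> [p]; elim: p x => [|z p IHp] x /=; first by move=> _ -> ->.
case/andP=> rxz zp yz xA yA; have [zA | zA] := boolP (z \in A).
  exact: IHp zp yz zA yA.
by exists x, z.
Qed.

Lemma pairable_connected B (r : rel T) : subrel r e ->
  (forall a b, r a b -> b \in B) -> {in B &, forall x y, connect r x y} ->
  pairable B.
Proof.
move=> r_e r_B B_conn.
have grow n : n <= #|B| -> exists A, [/\ A \subset B, #|A| = n & pairable A].
  elim: n => [|n IHn] ltnB.
    exists set0; rewrite sub0set cards0.
    by split=> //; apply: pairable_small; rewrite cards0.
  have [A [AB cardA pairA]] := IHn (ltnW ltnB).
  have /subsetPn[y yB yA] : ~~ (B \subset A).
    by apply: contraTN ltnB => /subset_leq_card; rewrite cardA -ltnNge.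
  have [A0 | [x xA]] := set_0Vmem A.
    exists [set y]; rewrite sub1set yB cards1 -cardA A0 cards0.
    by split=> //; apply: pairable_small; rewrite cards1.
  have [a [b [rab aA bA]]] := connect_cross (B_conn x y (subsetP AB x xA) yB) xA yA.
  exists (b |: A); rewrite subUset sub1set (r_B _ _ rab) AB cardsU1 bA cardA.
  by split=> //; apply: pairableU1 pairA aA bA (r_e _ _ rab).
have [A [AB cardA pairA]] := grow _ (leqnn #|B|).
suff -> : B = A by [].
by apply/eqP; rewrite eq_sym eqEcard AB cardA leqnn.
Qed.

Lemma is_cycle_cons v A p : upath_in A p -> v \notin A ->
  (forall a, a \in endpoints p -> e v a) -> is_cycle e (v :: p).
Proof.
case: p => [|x q] // /[dup] xqA /and4P[q0 xq uxq _] vA v_ends.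
have vxq : v \notin x :: q by apply: contra vA => /(upath_in_sub xqA).
have evx : e v x by apply: v_ends; rewrite mem_head.
have elv : e (last x q) v by rewrite e_sym; apply: v_ends; rewrite mem_seq2 eqxx orbT.
rewrite /is_cycle /ucycleb cons_uniq vxq uxq /= rcons_path xq evx elv !andbT.
by rewrite !ltnS lt0n size_eq0.
Qed.

Lemma pairing_cycles v A S F : v \notin A -> (forall y, y \in S -> e v y) ->
  pairing A S F -> edge_disjoint_cycles e [seq v :: p | p <- F].
Proof.
move=> vA Sv [_ FA uE uN NS]; split.
  apply/allP => _ /mapP[p pF ->]; apply: is_cycle_cons (allP FA p pF) vA _.
  by move=> a ap; apply/Sv/NS/flatten_mapP; exists p.
have dN := uniq_flatten_disjoint uN; have dE := uniq_flatten_disjoint uE.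
move: (conj dN dE) => /andP; rewrite !pairwise_map -pairwise_relI.
apply: sub_in_pairwise FA => p q pA qA /andP[dpq_N dpq_E] /=.
have [p0 q0] : p != [::] /\ q != [::] by case: p q pA qA {dpq_N dpq_E} => [|x p] [|y q].
apply: disjoint_cycle_edges_cons => //; apply: contra vA; exact: upath_in_sub.
Qed.

End Pairing.

Theorem corollary2p2 (T : finType) (e : rel T) :
  simple_graph e -> two_connected e -> phi_ge e (max_deg e)./2.
Proof.
move=> [e_sym e_irr] [T3 _ conn_del].
have [v ->] : {v | max_deg e = deg e v} by apply: eq_bigmax; apply: leq_trans T3.
have [F pF] : exists F, pairing e [set~ v] [set y | e v y] F.
  apply: (pairable_connected e_sym (r := del_vertex e v)).
  - by move=> x y /and3P[].
  - by move=> x y /and3P[_ _ yv]; rewrite !inE.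
  - by move=> x y; rewrite !inE; apply: conn_del.
  - by apply/subsetP => y; rewrite !inE; apply: contraTneq => ->; rewrite e_irr.
exists [seq v :: p | p <- F]; split; last by rewrite size_map; case: pF.
apply: (pairing_cycles e_sym _ _ pF) => [|y]; rewrite !inE ?eqxx //.
Qed.
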